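(* Let $M_1$ and $M_2$ be MUL-trees on the same set $S$ of labels. If $\Upsilon(M_1)=\Upsilon(M_2)$, then $M_1\cong M_2$. In particular, $m(M_1,M_2)=\frac12|\Upsilon(M_1)\bigtriangleup\Upsilon(M_2)|$ is a metric on the class of all MUL-trees labeled in $S$.
   Context: A MUL-tree (multi-labeled phylogenetic tree) over a finite set $S$ is a finite rooted tree whose leaves are each labeled by a non-empty subset of $S$ (different leaves may share labels). Isomorphism of MUL-trees is isomorphism of rooted trees preserving leaf label sets. The height of a node is the largest length of a path from it to a leaf. The nested label $\ell(v)$ is defined inductively: if $v$ is a leaf with label set $S_v$, $\ell(v)=S_v$; otherwise $\ell(v)$ is the multiset $\{\ell(v_1),\dots,\ell(v_k)\}$ of the nested labels of its children $v_1,\dots,v_k$. $\Upsilon(M)$ is the multiset of nested labels of all nodes of $M$ (each with multiplicity the number of nodes having it); $\bigtriangleup$ is multiset symmetric difference (multiplicity $|M_1(x)-M_2(x)|$) and $|\cdot|$ is the sum of multiplicities. *)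

From mathcomp Require Import all_boot all_order all_algebra.
Set Implicit Arguments. Unset Strict Implicit. Unset Printing Implicit Defensive.

Section MulTrees.
Variable S : finType.

(* A rooted tree: a leaf carries a label set, an internal node carries its
   (finite, ordered only for representation purposes) list of children. *)
Inductive mtree : Type :=
| MLeaf of {set S}
| MNode of seq mtree.

(* Well-formedness of a MUL-tree on S: leaf labels are non-empty subsets of S,
   and a node with no children is not allowed (it would be an unlabeled leaf). *)
Fixpoint wf_mtree (t : mtree) : bool :=
  match t with
  | MLeaf A => A != set0
  | MNode ts => (0 < size ts) && all wf_mtree ts
  end.

Definition mdflt : mtree := MLeaf set0.

Inductive mtree_iso : mtree -> mtree -> Prop :=
| iso_leaf (A : {set S}) : mtree_iso (MLeaf A) (MLeaf A)
| iso_node (ts us : seq mtree) (s : seq nat) :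
    size us = size ts ->
    perm_eq s (iota 0 (size ts)) ->
    (forall i, i < size ts -> mtree_iso (nth mdflt ts i) (nth mdflt us (nth 0 s i))) ->
    mtree_iso (MNode ts) (MNode us).

(* A nested label is either a label set (leaf) or a finite
   multiset of nested labels.  Finite multisets are represented canonically by
   lists sorted w.r.t. the (total, injective) order induced by [pickle], so that
   two nested labels are equal as nested multisets iff they are equal terms. *)
Definition nlabel := GenTree.tree {set S}.

Definition msort (s : seq nlabel) : seq nlabel :=
  sort (fun a b => pickle a <= pickle b) s.

Fixpoint nested_label (t : mtree) : nlabel :=
  match t with
  | MLeaf A => GenTree.Leaf A
  | MNode ts => GenTree.Node 0 (msort (map nested_label ts))
  end.

(* Upsilon(M): the multiset (as a list, i.e. up to permutation) of the nested
   labels of all nodes of M, each node contributing once. *)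
Fixpoint Upsilon (t : mtree) : seq nlabel :=
  nested_label t ::
  match t with
  | MLeaf _ => [::]
  | MNode ts => flatten (map Upsilon ts)
  end.

(* |A symdiff B| for finite multisets represented as lists: the sum over all
   distinct elements x of |A(x) - B(x)|. *)
Definition msymdiff_size (A B : seq nlabel) : nat :=
  \sum_(x <- undup (A ++ B)) ((count_mem x A - count_mem x B) + (count_mem x B - count_mem x A)).

Definition mdist (M1 M2 : mtree) : rat :=
  ((msymdiff_size (Upsilon M1) (Upsilon M2))%:R / 2)%R.

End MulTrees.

(* The nested label of the root is the largest element of [Upsilon M]: every
   other node's nested label is a strict sub-term of it.  So [Upsilon M1 =
   Upsilon M2] forces equal root nested labels, and nested labels determine a
   MUL-tree up to isomorphism, since children's labels are compared as sorted
   lists, i.e. as multisets.  The metric axioms for [m] are those of the l1 distance between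
   multiplicity functions. *)
From mathcomp Require Import all_boot all_order all_algebra.
From mathcomp Require Import zify.
Import Order.TTheory GRing.Theory Num.Theory.

Set Implicit Arguments.
Unset Strict Implicit.

Section Reindex.
Variables (T : Type) (U : eqType).

Lemma perm_map_reindex (f : T -> U) (x0 : T) ts us :
  perm_eq (map f ts) (map f us) ->
  size us = size ts /\
  exists2 s, perm_eq s (iota 0 (size ts)) &
    forall i, i < size ts -> f (nth x0 ts i) = f (nth x0 us (nth 0 s i)).
Proof.
move=> fts; have Esz : size us = size ts.
  by have := perm_size fts; rewrite !size_map.
split=> //; case/(perm_iotaP (f x0)): fts => s; rewrite size_map Esz => Ps Ets.
exists s => // i ilt.
have Ssz : size s = size ts by rewrite (perm_size Ps) size_iota.
have : nth 0 s i \in iota 0 (size ts) by rewrite -(perm_mem Ps) mem_nth ?Ssz.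
rewrite mem_iota add0n -Esz => silt.
by rewrite -(nth_map x0 (f x0)) // Ets (nth_map 0) ?Ssz // (nth_map x0).
Qed.

Lemma perm_flatten_map (I : eqType) (F G : I -> seq U) (l : seq I) :
  (forall x, x \in l -> perm_eq (F x) (G x)) ->
  perm_eq (flatten (map F l)) (flatten (map G l)).
Proof.
elim: l => [|a l IHl] FG //=.
by rewrite perm_cat ?FG ?mem_head ?IHl // => x xl; rewrite FG // inE xl orbT.
Qed.

Lemma perm_flatten_reindex (g : T -> seq U) (x0 : T) ts us s :
  size us = size ts -> perm_eq s (iota 0 (size ts)) ->
  (forall i, i < size ts ->
     perm_eq (g (nth x0 ts i)) (g (nth x0 us (nth 0 s i)))) ->
  perm_eq (flatten (map g ts)) (flatten (map g us)).
Proof.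
move=> Esz Ps gts.
rewrite -{1}(mkseq_nth x0 ts) -{1}(mkseq_nth x0 us) /mkseq -!map_comp.
apply: (@perm_trans _ (flatten (map (g \o nth x0 us) s))).
  have -> : s = map (nth 0 s) (iota 0 (size ts)).
    by rewrite -[in RHS](size_iota 0 (size ts)) -(perm_size Ps) -/(mkseq _ _) mkseq_nth.
  by rewrite -map_comp; apply: perm_flatten_map => i; rewrite mem_iota; apply: gts.
by apply/perm_flatten/perm_map; rewrite Esz.
Qed.

End Reindex.

Section MulTreeNestedLabels.
Variable S : finType.
Notation mtree := (mtree S).
Notation nlabel := (nlabel S).
Notation d := (mdflt S).

Lemma mtree_nth_ind (P : mtree -> Prop) :
  (forall A, P (MLeaf A)) ->
  (forall ts, (forall i, i < size ts -> P (nth d ts i)) -> P (MNode ts)) ->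
  forall t, P t.
Proof.
move=> Pleaf Pnode; fix IHt 1; case=> [A|ts]; first exact: Pleaf.
apply: Pnode; move: ts; fix IHts 1.
case=> [|t ts] [|i] ilt; [by clear IHt IHts | by clear IHt IHts | exact: IHt | ].
exact: IHts ts i ilt.
Qed.

Lemma msortP (s1 s2 : seq nlabel) : reflect (msort s1 = msort s2) (perm_eq s1 s2).
Proof.
apply: perm_sortP => [a b|b a c|a b /anti_leq]; first exact: leq_total.
  exact: leq_trans.
exact/(pcan_inj (@pickleK nlabel)).
Qed.

Lemma nested_label_iso (t u : mtree) : nested_label t = nested_label u -> mtree_iso t u.
Proof.
elim/mtree_nth_ind: t u => [A|ts IHts] [B|us] //=; first by case=> ->; constructor.
case=> /msortP /(perm_map_reindex d) [Esz [s Ps Ets]].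
by apply: (iso_node Esz Ps) => i ilt; apply/IHts/Ets.
Qed.

Lemma nested_label_in_Upsilon (t : mtree) : nested_label t \in Upsilon t.
Proof. by case: t => [A|ts]; rewrite mem_head. Qed.

Fixpoint nlabel_size (x : nlabel) : nat :=
  match x with
  | GenTree.Leaf _ => 1
  | GenTree.Node _ xs => (sumn (map nlabel_size xs)).+1
  end.

Lemma nlabel_size_mem (xs : seq nlabel) x :
  x \in xs -> nlabel_size x <= sumn (map nlabel_size xs).
Proof.
elim: xs => [|y xs IHxs] //=; rewrite inE => /predU1P[->|/IHxs]; first exact: leq_addr.
by move/leq_trans; apply; apply: leq_addl.
Qed.

Lemma Upsilon_root_max (t : mtree) x :
  x \in Upsilon t -> x = nested_label t \/ nlabel_size x < nlabel_size (nested_label t).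
Proof.
elim/mtree_nth_ind: t x => [A|ts IHts] x /=; first by rewrite inE => /eqP; left.
rewrite inE => /predU1P[->|]; first by left.
case/flattenP => ys /(nthP [::]) [i]; rewrite size_map => ilt <-.
rewrite (nth_map d) // => /IHts x_sub; right; rewrite ltnS.
have child_le : nlabel_size (nested_label (nth d ts i))
                <= sumn (map nlabel_size (msort (map (@nested_label S) ts))).
  apply: nlabel_size_mem; rewrite mem_sort; apply/(nthP (nested_label d)).
  by exists i; rewrite ?size_map // (nth_map d).
case: (x_sub ilt) => [-> //|/ltnW lt_child].
exact: leq_trans lt_child child_le.
Qed.

Lemma Upsilon_perm_nested_label (t u : mtree) :
  perm_eq (Upsilon t) (Upsilon u) -> nested_label t = nested_label u.
Proof.
move=> tu.
have tu_mem : nested_label t \in Upsilon u by rewrite -(perm_mem tu) nested_label_in_Upsilon.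
have ut_mem : nested_label u \in Upsilon t by rewrite (perm_mem tu) nested_label_in_Upsilon.
case: (Upsilon_root_max tu_mem) => // lt_tu.
case: (Upsilon_root_max ut_mem) => [->//|lt_ut].
by have := ltn_trans lt_tu lt_ut; rewrite ltnn.
Qed.

Lemma Upsilon_perm_iso (t u : mtree) : perm_eq (Upsilon t) (Upsilon u) -> mtree_iso t u.
Proof. by move/Upsilon_perm_nested_label/nested_label_iso. Qed.

Lemma iso_Upsilon_perm (t u : mtree) : mtree_iso t u -> perm_eq (Upsilon t) (Upsilon u).
Proof.
elim=> [A|ts us s Esz Ps _ IHts] //=.
suff -> : msort (map (@nested_label S) ts) = msort (map (@nested_label S) us).
  by rewrite perm_cons (perm_flatten_reindex Esz Ps IHts).
apply/msortP; rewrite -(flatten_map1 _ ts) -(flatten_map1 _ us).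
apply: (perm_flatten_reindex (x0 := d) Esz Ps) => i ilt.
by rewrite (Upsilon_perm_nested_label (IHts i ilt)).
Qed.

End MulTreeNestedLabels.

Section MultisetDistance.
Variable S : finType.
Notation nlabel := (nlabel S).

Definition count_dist (A B : seq nlabel) (x : nlabel) : nat :=
  (count_mem x A - count_mem x B) + (count_mem x B - count_mem x A).

Lemma msymdiff_sizeE (A B U : seq nlabel) :
  uniq U -> {subset A ++ B <= U} -> msymdiff_size A B = \sum_(x <- U) count_dist A B x.
Proof.
move=> Uuniq sABU; rewrite /msymdiff_size [RHS](bigID [pred x | x \in A ++ B]) /=.
rewrite [X in _ = _ + X]big1 ?addn0 => [|x]; last first.
  by rewrite mem_cat negb_or => /andP[xA xB]; rewrite /count_dist !(count_memPn _).
rewrite -[RHS]big_filter /count_dist; apply/perm_big/uniq_perm.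
- exact: undup_uniq.
- exact: filter_uniq.
- move=> x; rewrite mem_undup mem_filter /=.
  by apply/idP/andP => [xAB|[]//]; rewrite xAB sABU.
Qed.

Lemma msymdiff_sizeC (A B : seq nlabel) : msymdiff_size A B = msymdiff_size B A.
Proof.
have sABU : {subset A ++ B <= undup (B ++ A)}.
  by move=> x; rewrite mem_undup !mem_cat orbC.
rewrite (msymdiff_sizeE (undup_uniq _) sABU).
by apply: eq_bigr => x _; rewrite /count_dist addnC.
Qed.

Lemma msymdiff_size_triangle (A B C : seq nlabel) :
  msymdiff_size A C <= msymdiff_size A B + msymdiff_size B C.
Proof.
pose U := undup (A ++ B ++ C).
have sizeE (X Y : seq nlabel) : {subset X <= A ++ B ++ C} -> {subset Y <= A ++ B ++ C} ->
    msymdiff_size X Y = \sum_(x <- U) count_dist X Y x.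
  move=> sX sY; apply: msymdiff_sizeE (undup_uniq _) _ => x.
  by rewrite mem_cat mem_undup => /orP[/sX|/sY].
have [sA sB sC] : [/\ {subset A <= A ++ B ++ C}, {subset B <= A ++ B ++ C}
                    & {subset C <= A ++ B ++ C}].
  by split=> x; rewrite !mem_cat => ->; rewrite ?orbT.
rewrite (sizeE A C) // (sizeE A B) // (sizeE B C) // -big_split.
by apply: leq_sum => x _; rewrite /count_dist /=; lia.
Qed.

Lemma msymdiff_size_eq0 (A B : seq nlabel) : (msymdiff_size A B == 0) = perm_eq A B.
Proof.
rewrite /msymdiff_size sum_nat_seq_eq0 /perm_eq.
apply/allP/allP => AB x xAB.
  by have := AB x; rewrite mem_undup => /(_ xAB) /eqP ABx; apply/eqP; lia.
by have := AB x; rewrite -mem_undup => /(_ xAB) /eqP ABx; apply/eqP; lia.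
Qed.

Lemma mdist_ge0 (M1 M2 : mtree S) : (0 <= mdist M1 M2)%R.
Proof. by rewrite divr_ge0 ?ler0n. Qed.

Lemma mdistC (M1 M2 : mtree S) : mdist M1 M2 = mdist M2 M1.
Proof. by rewrite /mdist msymdiff_sizeC. Qed.

Lemma mdist_triangle (M1 M2 M3 : mtree S) :
  (mdist M1 M3 <= mdist M1 M2 + mdist M2 M3)%R.
Proof.
by rewrite /mdist -mulrDl ler_pM2r ?invr_gt0 // -natrD ler_nat msymdiff_size_triangle.
Qed.

Lemma mdist_eq0 (M1 M2 : mtree S) : mdist M1 M2 = 0%R <-> mtree_iso M1 M2.
Proof.
rewrite /mdist; split=> [/eqP|/iso_Upsilon_perm].
  by rewrite mulf_eq0 invr_eq0 !pnatr_eq0 orbF msymdiff_size_eq0 => /Upsilon_perm_iso.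
by rewrite -msymdiff_size_eq0 => /eqP ->; rewrite mul0r.
Qed.

End MultisetDistance.

Theorem proposition6 (S : finType) :
  (forall M1 M2 : mtree S, wf_mtree M1 -> wf_mtree M2 ->
     perm_eq (Upsilon M1) (Upsilon M2) -> mtree_iso M1 M2)
  /\
  (forall M1 M2 M3 : mtree S, wf_mtree M1 -> wf_mtree M2 -> wf_mtree M3 ->
     [/\ (0 <= mdist M1 M2)%R,
         mdist M1 M2 = 0%R <-> mtree_iso M1 M2,
         mdist M1 M2 = mdist M2 M1
       & (mdist M1 M3 <= mdist M1 M2 + mdist M2 M3)%R]).
Proof.
split=> [M1 M2 _ _|M1 M2 M3 _ _ _]; first exact: Upsilon_perm_iso.
split; [exact: mdist_ge0 | exact: mdist_eq0 | exact: mdistC | exact: mdist_triangle].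
Qed.
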